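(* Let $X$ be an infinite connected normal Hausdorff space which has no quotient space homeomorphic to $[0,1]$ (i.e. admits no continuous quotient surjection onto $[0,1]$). Then $X$ is punctiform and $X$ is not locally connected.
   Context: A space is punctiform if it contains no connected compact subset with more than one point. A surjection $f\colon X\to Y$ is a quotient map if for every $G\subseteq Y$, $G$ is open in $Y$ iff $f^{-1}(G)$ is open in $X$. *)

From HB Require Import structures.
From mathcomp Require Import all_boot all_order all_algebra.
From mathcomp Require Import all_classical all_reals all_analysis.
Set Implicit Arguments. Unset Strict Implicit. Unset Printing Implicit Defensive.
Import Order.TTheory GRing.Theory Num.Theory numFieldNormedType.Exports.
Local Open Scope classical_set_scope.
Local Open Scope ring_scope.

Definition open_in_unit_interval (R : realType) (G : set R) : Prop :=
  exists U : set R, open U /\ G = U `&` `[(0:R), 1]%classic.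

Definition quotient_map_onto_unit_interval (X : topologicalType) (R : realType)
  (f : X -> R) : Prop :=
  range f = `[(0:R), 1]%classic /\
  forall G : set R, G `<=` `[(0:R), 1]%classic ->
    (open_in_unit_interval G <-> open (f @^-1` G)).

Definition punctiform (X : topologicalType) : Prop :=
  forall A : set X, compact A -> connected A ->
    forall x y, A x -> A y -> x = y.

Definition locally_connected (X : topologicalType) : Prop :=
  forall (x : X) (U : set X), open U -> U x ->
    exists V : set X, [/\ open V, V x, connected V & V `<=` U].

From HB Require Import structures.
From mathcomp Require Import all_boot all_order all_algebra.
From mathcomp Require Import all_classical all_reals all_analysis.
From mathcomp Require Import lra.
Set Implicit Arguments. Unset Strict Implicit. Unset Printing Implicit Defensive.
Import numFieldNormedType.Exports.
Import Order.TTheory GRing.Theory Num.Theory.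
Local Open Scope classical_set_scope.
Local Open Scope ring_scope.

(* Urysohn's lemma turns two distinct points of X into a continuous
   f : X -> [0,1] taking the values 0 and 1 there; it suffices to show that f
   would be a quotient map in each of the two excluded situations.  If a
   compact connected set A contains both points, then f(A) = [0,1], and the
   complement in [0,1] of a set G with f^-1(G) open is the compact image of
   A \ f^-1(G).  If X is locally connected, f is onto by connectedness of X;
   were G not a neighbourhood in [0,1] of some t in G, points outside G would
   accumulate at t from one side, say from below.  A connected neighbourhood
   inside f^-1(G) of a point of f^-1(t) has an interval image inside G
   containing t, which therefore cannot reach below t; so {f >= t} is open, and
   together with {f < t} it disconnects X. *)

Lemma open_in_unit_interval_nbhs (R : realType) (G : set R) :
  G `<=` `[(0:R), 1]%classic ->
  (forall t, G t -> nbhs t [set z | `[(0:R), 1]%classic z -> G z]) ->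
  open_in_unit_interval G.
Proof.
move=> G01 Gnbhs; exists [set z | `[(0:R), 1]%classic z -> G z]°.
split; first exact: open_interior.
apply/seteqP; split=> [t Gt|t [/interior_subset Pt t01]]; last exact: Pt.
by split; [exact: Gnbhs|exact: G01].
Qed.

Lemma not_nbhs_one_sided_gap (R : realType) (P : set R) (t : R) :
  P t -> ~ nbhs t P ->
  (forall e : R, 0 < e -> exists2 s, t - e < s < t & ~ P s) \/
  (forall e : R, 0 < e -> exists2 s, t < s < t + e & ~ P s).
Proof.
move=> Pt notP; apply: contrapT => /not_orP[/existsNP[e1 /not_implyP[e1_gt0 below]]
  /existsNP[e2 /not_implyP[e2_gt0 above]]].
apply: notP; apply/nbhs_ballP; exists (Num.min e1 e2) => /=; first by rewrite lt_min e1_gt0.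
move=> z; rewrite /ball /= lt_min => /andP[]; rewrite !ltr_norml => /andP[? ?] /andP[? ?].
have [zt|tz|->] := ltgtP z t; last exact: Pt.
- apply: contrapT => Pz; apply: below; exists z => //; apply/andP; split; lra.
- apply: contrapT => Pz; apply: above; exists z => //; apply/andP; split; lra.
Qed.

Lemma urysohn_points (R : realType) (X : topologicalType) (x y : X) :
  normal_space X -> hausdorff_space X -> x <> y ->
  exists f : X -> R, [/\ continuous f, range f `<=` `[0, 1], f x = 0 & f y = 1].
Proof.
move=> nX hX xy.
have closed1 (z : X) : closed [set z] by exact/accessible_closed_set1/hausdorff_accessible.
have : uniform_separator [set x] [set y].
  apply: (proj1 (@normal_separatorP R X) nX) => //.
  by apply/seteqP; split => // z [/= -> ].
move=> /(proj1 (@uniform_separatorP X R _ _))[f [cf f01 fx fy]].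
by exists f; split => //; [apply: fx | apply: fy]; eexists.
Qed.

Lemma connected_image_unit_interval (R : realType) (X : topologicalType)
    (f : X -> R) (A : set X) (x y : X) :
  continuous f -> connected A -> A x -> A y -> f x = 0 -> f y = 1 ->
  `[(0:R), 1] `<=` f @` A.
Proof.
move=> cf cA Ax Ay fx fy r r01.
have /connected_intervalP fA : connected (f @` A).
  by apply: connected_continuous_connected => //; exact: continuous_subspaceT.
by apply: (fA 0 1); [exists x|exists y|].
Qed.

Lemma quotient_map_onto_unit_intervalW (R : realType) (X : topologicalType)
    (f : X -> R) :
  continuous f -> range f `<=` `[0, 1] -> `[(0:R), 1] `<=` range f ->
  (forall G, G `<=` `[(0:R), 1] -> open (f @^-1` G) -> open_in_unit_interval G) ->
  quotient_map_onto_unit_interval f.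
Proof.
move=> cf f01 onto Gopen; split; first exact/seteqP.
move=> G G01; split; last exact: Gopen.
move=> [U [oU ->]]; have -> : f @^-1` (U `&` `[0, 1]) = f @^-1` U.
  by apply/seteqP; split=> [z []//|z Uz]; split=> //; apply: f01; exists z.
exact: (proj1 (continuousP f) cf).
Qed.

Lemma compact_image_open_in_unit_interval (R : realType) (X : topologicalType)
    (f : X -> R) (A : set X) (G : set R) :
  continuous f -> compact A -> `[(0:R), 1] `<=` f @` A ->
  G `<=` `[(0:R), 1] -> open (f @^-1` G) -> open_in_unit_interval G.
Proof.
move=> cf cA onto G01 oG; exists (~` (f @` (A `\` f @^-1` G))); split.
  rewrite openC; apply: compact_closed; first exact: Rhausdorff.
  apply: continuous_compact; first exact: continuous_subspaceT.
  by rewrite setDE; apply: compact_closedI => //; rewrite -openC setCK.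
apply/seteqP; split=> [r Gr|r [notr r01]].
  by split=> [[a [_ nGfa] far]|]; [apply: nGfa; rewrite /preimage /= far|exact: G01].
have [a Aa far] := onto r r01.
apply: contrapT => nGr; apply: notr; exists a => //.
by split=> //; rewrite /preimage /= far.
Qed.

Lemma connected_superlevel_not_nbhs (R : realType) (X : topologicalType)
    (f : X -> R) (t : R) (a b : X) :
  connected [set: X] -> continuous f -> f a < t -> t <= f b ->
  exists2 x, f x = t & ~ nbhs x [set y | t <= f y].
Proof.
move=> cX cf fa fb; apply: contrapT => /forall2NP level_nbhs.
have open_sub : open [set y | f y < t].
  exact: open_comp (fun y _ => cf y) (@open_lt _ t).
have open_super : open [set y | t <= f y].
  rewrite openE => y /=; rewrite le_eqVlt => /orP[/eqP ty|ty].
    by case: (level_nbhs y) => [/(_ (esym ty))|/contrapT].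
  apply: (filterS (P := [set y | t < f y])) => [z /ltW //|].
  apply: open_nbhs_nbhs; split=> //.
  exact: open_comp (fun y _ => cf y) (@open_gt _ t).
have : [set y | f y < t] = setT.
  apply: cX; first by exists a.
    by exists [set y | f y < t]; rewrite ?setTI.
  exists (~` [set y | t <= f y]); first by rewrite closedC.
  by rewrite setTI; apply/seteqP; split=> z /=; rewrite ltNge => /negP.
by move=> /seteqP[_ /(_ b I)] /=; rewrite ltNge fb.
Qed.

Lemma locally_connected_level_nbhs (R : realType) (X : topologicalType)
    (f : X -> R) (P : set R) (t : R) (x : X) :
  locally_connected X -> continuous f -> open (f @^-1` P) ->
  (forall e : R, 0 < e -> exists2 s, t - e < s < t & ~ P s) ->
  P t -> f x = t -> nbhs x [set y | t <= f y].
Proof.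
move=> lcX cf oP gap Pt fx.
have [V [oV Vx cV VP]] : exists V, [/\ open V, V x, connected V & V `<=` f @^-1` P].
  by apply: lcX oP _; rewrite /preimage /= fx.
apply: (filterS (P := V)); last exact: open_nbhs_nbhs.
move=> y Vy /=; rewrite leNgt; apply/negP => fyt.
have [s /andP[fys st] nPs] : exists2 s, t - (t - f y) < s < t & ~ P s.
  by apply: gap; rewrite subr_gt0.
have /connected_intervalP fV : connected (f @` V).
  by apply: connected_continuous_connected => //; exact: continuous_subspaceT.
have [z Vz fzs] : (f @` V) s.
  by apply: (fV (f y) t); [exists y|exists x|apply/andP; split; apply: ltW; lra].
by apply: nPs; rewrite -fzs; exact: VP.
Qed.

Lemma locally_connected_no_left_gap (R : realType) (X : topologicalType)
    (f : X -> R) (P : set R) (t : R) (a b : X) :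
  connected [set: X] -> locally_connected X -> continuous f ->
  open (f @^-1` P) -> P t -> f a < t -> f b = t ->
  ~ (forall e : R, 0 < e -> exists2 s, t - e < s < t & ~ P s).
Proof.
move=> cX lcX cf oP Pt fa fb gap.
have tfb : t <= f b by rewrite fb.
have [x fx] := connected_superlevel_not_nbhs cX cf fa tfb.
by apply; exact: (locally_connected_level_nbhs lcX cf oP gap).
Qed.

Lemma locally_connected_open_in_unit_interval (R : realType) (X : topologicalType)
    (f : X -> R) (G : set R) :
  connected [set: X] -> locally_connected X -> continuous f ->
  range f `<=` `[0, 1] -> `[(0:R), 1] `<=` range f ->
  G `<=` `[(0:R), 1] -> open (f @^-1` G) -> open_in_unit_interval G.
Proof.
move=> cX lcX cf f01 onto G01 oG; apply: open_in_unit_interval_nbhs => // t Gt.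
(* P adds the complement of [0,1] to G, which does not change the preimage. *)
set P := [set z | `[(0:R), 1]%classic z -> G z].
have Pt : P t by [].
have oP : open (f @^-1` P).
  suff -> : f @^-1` P = f @^-1` G by [].
  by apply/seteqP; split=> x /= Pfx; [apply: Pfx; apply: f01; exists x|].
have [b _ fb] := onto t (G01 t Gt).
apply: contrapT => /(not_nbhs_one_sided_gap Pt)[below|above].
  have [s /andP[_ st] /not_implyP[s01 _]] := below 1 ltr01.
  have [a _ fa] := onto s s01.
  apply: (locally_connected_no_left_gap (a := a) cX lcX cf oP Pt _ fb below).
  by rewrite fa.
have cNf : continuous (fun x => - f x) by move=> x; apply: continuousN; exact: cf.
have oNP : open ((fun x => - f x) @^-1` [set r | P (- r)]).
  by rewrite /preimage /=; under eq_set do rewrite opprK.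
have [s /andP[ts _] /not_implyP[s01 _]] := above 1 ltr01.
have [a _ fa] := onto s s01.
apply: (locally_connected_no_left_gap (t := - t) (a := a) (b := b) cX lcX cNf oNP).
- by rewrite /= opprK.
- by rewrite ltrN2 fa.
- by rewrite fb.
- move=> e e_gt0; have [r /andP[tr rt] nPr] := above e e_gt0.
  by exists (- r); [apply/andP; split; lra|rewrite /= opprK].
Qed.

Theorem mainTheorem6 (R : realType) (X : topologicalType) :
  infinite_set [set: X] ->
  connected [set: X] ->
  normal_space X ->
  hausdorff_space X ->
  ~ (exists f : X -> R, quotient_map_onto_unit_interval f) ->
  punctiform X /\ ~ locally_connected X.
Proof.
move=> iX cX nX hX noq; split.
  move=> A cA conA x y Ax Ay; apply: contrapT => xy.
  have [f [cf f01 fx fy]] := urysohn_points R nX hX xy.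
  have fA := connected_image_unit_interval cf conA Ax Ay fx fy.
  apply: noq; exists f; apply: quotient_map_onto_unit_intervalW => //.
    exact: subset_trans fA (image_subset f (@subsetT _ A)).
  by move=> G; exact: compact_image_open_in_unit_interval cf cA fA.
move=> lcX.
have [x _] := infinite_setN0 iX.
have [y [_ /= yx]] := infinite_setN0 (infinite_setD iX (finite_set1 x)).
have [f [cf f01 fx fy]] := urysohn_points R nX hX (fun xy => yx (esym xy)).
have onto := connected_image_unit_interval cf cX I I fx fy.
apply: noq; exists f; apply: quotient_map_onto_unit_intervalW => //.
by move=> G; exact: locally_connected_open_in_unit_interval cX lcX cf f01 _.
Qed.
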